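(* Let $\mathscr{A}$ be a finite alphabet, let $\Xi\subseteq\mathscr{A}^{\mathbb{Z}}$ be a periodically approximable subshift and let $(\Xi_k)_k$ be a sequence of periodic subshifts converging to $\Xi$. If $\Xi$ contains a non-periodic element, then the period $q_k=\#\Xi_k$ tends to infinity as $k\to\infty$.
   Context: $\mathscr{A}^{\mathbb{Z}}$ has the product topology and shift $(T\xi)(j)=\xi(j-1)$; a subshift is a non-empty closed $T$-invariant subset, and the set of subshifts carries the Hausdorff (Vietoris) topology (basis: $\{\Xi:\Xi\cap F=\emptyset,\Xi\cap O\neq\emptyset\ \forall O\in\mathcal{F}\}$, $F$ closed, $\mathcal{F}$ a finite family of open sets). $\eta$ is periodic if $T^n\eta=\eta$ for some $n\geq1$; a periodic subshift is $\mathrm{Orb}(\eta)=\{T^n\eta:n\in\mathbb{Z}\}$ for a periodic $\eta$. $\Xi$ is periodically approximable if some sequence of periodic subshifts converges to it. *)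

From Stdlib Require Import ZArith List.
From mathcomp Require Import all_boot.

Set Implicit Arguments.
Unset Strict Implicit.
Unset Printing Implicit Defensive.

Definition config (A : Type) := Z -> A.

Definition shift_by (A : Type) (n : Z) (xi : config A) : config A :=
  fun j => xi (j - n)%Z.

Definition shift (A : Type) (xi : config A) : config A := shift_by 1 xi.

(* Open sets of the product topology on A^Z (A finite, discrete):
   O is open iff around each of its points it contains a cylinder
   {eta | eta = xi on [-N, N]}. *)
Definition open_set (A : Type) (O : config A -> Prop) : Prop :=
  forall xi, O xi -> exists N : nat,
    forall eta, (forall j, (Z.abs j <= Z.of_nat N)%Z -> eta j = xi j) -> O eta.

Definition closed_set (A : Type) (F : config A -> Prop) : Prop :=
  open_set (fun xi => ~ F xi).

Definition subshift (A : Type) (Xi : config A -> Prop) : Prop :=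
  (exists xi, Xi xi) /\ closed_set Xi /\
  (forall xi, Xi xi <-> Xi (shift xi)).

Definition periodic (A : Type) (eta : config A) : Prop :=
  exists n : nat, (1 <= n)%N /\ shift_by (Z.of_nat n) eta = eta.

Definition Orb (A : Type) (eta : config A) : config A -> Prop :=
  fun xi => exists n : Z, xi = shift_by n eta.

Definition periodic_subshift (A : Type) (Xi : config A -> Prop) : Prop :=
  exists eta, periodic eta /\ (forall xi, Xi xi <-> Orb eta xi).

(* Convergence in the Hausdorff (Vietoris) topology on subshifts, with basis
   {Xi' : Xi' /\ F = empty, Xi' /\ O <> empty for all O in Fam}. *)
Definition vietoris_converges (A : Type) (Xis : nat -> config A -> Prop)
    (Xi : config A -> Prop) : Prop :=
  forall (F : config A -> Prop) (Fam : list (config A -> Prop)),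
    closed_set F -> (forall O, List.In O Fam -> open_set O) ->
    (forall xi, Xi xi -> ~ F xi) ->
    (forall O, List.In O Fam -> exists xi, Xi xi /\ O xi) ->
    exists K : nat, forall k, (K <= k)%N ->
      (forall xi, Xis k xi -> ~ F xi) /\
      (forall O, List.In O Fam -> exists xi, Xis k xi /\ O xi).

Definition periodically_approximable (A : Type) (Xi : config A -> Prop) : Prop :=
  exists Xis : nat -> config A -> Prop,
    (forall k, periodic_subshift (Xis k)) /\ vietoris_converges Xis Xi.

Definition has_card (A : Type) (S : config A -> Prop) (q : nat) : Prop :=
  exists l : list (config A), length l = q /\ List.NoDup l /\
    (forall xi, S xi <-> List.In xi l).

From Pilot Require Import Defs.
From Stdlib Require Import ZArith List.
From mathcomp Require Import all_boot.
From Stdlib Require Import Lia Classical FunctionalExtensionality FinFun.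

Set Implicit Arguments.
Unset Strict Implicit.

(* If x in Xi is not periodic, its shifts x, T x, ..., T^(M-1) x are M distinct
   points of Xi; a window [-N, N] on which they pairwise differ yields M pairwise
   disjoint cylinders, each meeting Xi.  Vietoris convergence forces Xi_k to meet
   all of them for k large, so Xi_k has at least M elements. *)

Lemma shift_by_0 (A : Type) (x : config A) : shift_by 0 x = x.
Proof.
  apply functional_extensionality; intro t; unfold shift_by; f_equal; lia.
Qed.

Lemma shift_by_add (A : Type) (m n : Z) (x : config A) :
  shift_by m (shift_by n x) = shift_by (m + n) x.
Proof.
  apply functional_extensionality; intro t; unfold shift_by; f_equal; lia.
Qed.

Lemma subshift_shift_by (A : Type) (Xi : config A -> Prop) (x : config A) :
  subshift Xi -> Xi x -> forall n : Z, Xi (shift_by n x).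
Proof.
  intros [_ [_ Hshift]] Hx n.
  induction n as [|n IH|n IH] using Z.peano_ind.
  - rewrite shift_by_0; exact Hx.
  - rewrite <- Z.add_1_l, <- shift_by_add; exact (proj1 (Hshift _) IH).
  - apply (proj2 (Hshift _)); unfold Defs.shift; rewrite shift_by_add.
    replace (1 + Z.pred n)%Z with n by lia; exact IH.
Qed.

Lemma not_periodic_shift_by_injective (A : Type) (x : config A) :
  ~ periodic x -> Injective (fun n : nat => shift_by (Z.of_nat n) x).
Proof.
  intros Hnp.
  assert (Hlt : forall i j : nat, (i < j)%coq_nat ->
            shift_by (Z.of_nat i) x <> shift_by (Z.of_nat j) x).
  { intros i j Hij Heq; apply Hnp; exists (j - i)%coq_nat; split; [apply/leP; lia|].
    apply (f_equal (shift_by (- Z.of_nat i))) in Heq.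
    rewrite !shift_by_add Z.add_opp_diag_l shift_by_0 in Heq.
    replace (Z.of_nat (j - i)%coq_nat) with (- Z.of_nat i + Z.of_nat j)%Z by lia.
    symmetry; exact Heq. }
  intros i j Heq; destruct (Nat.lt_total i j) as [Hij|[Hij|Hij]]; auto.
  - now destruct (Hlt i j Hij).
  - now destruct (Hlt j i Hij).
Qed.

Definition agree_on (A : Type) (N : nat) (x y : config A) : Prop :=
  forall t, (Z.abs t <= Z.of_nat N)%Z -> x t = y t.

Definition cylinder (A : Type) (N : nat) (x : config A) : config A -> Prop :=
  fun y => agree_on N y x.

Lemma agree_on_mono (A : Type) (N N' : nat) (x y : config A) :
  (N <= N')%coq_nat -> agree_on N' x y -> agree_on N x y.
Proof. intros HN Hxy t Ht; apply Hxy; lia. Qed.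

Lemma agree_on_all_eq (A : Type) (x y : config A) :
  (forall N, agree_on N x y) -> x = y.
Proof.
  intros Hxy; apply functional_extensionality; intro t.
  apply (Hxy (Z.to_nat (Z.abs t))); lia.
Qed.

Lemma cylinder_open (A : Type) (N : nat) (x : config A) : open_set (cylinder N x).
Proof.
  intros y Hy; exists N; intros z Hzy t Ht.
  rewrite (Hzy t Ht); exact (Hy t Ht).
Qed.

Lemma empty_closed (A : Type) : closed_set (fun _ : config A => False).
Proof. intros x _; exists 0%nat; auto. Qed.

Lemma list_exists_uniform (X : Type) (P : X -> nat -> Prop) (l : list X) :
  (forall a N N', (N <= N')%coq_nat -> P a N -> P a N') ->
  (forall a, In a l -> exists N, P a N) ->
  exists N, forall a, In a l -> P a N.
Proof.
  intros Hmono; induction l as [|a l IH]; intros Hex.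
  - exists 0%nat; intros b [].
  - destruct (Hex a (in_eq _ _)) as [Na HNa].
    destruct IH as [Nl HNl]; [intros b Hb; apply Hex; right; exact Hb|].
    exists (Nat.max Na Nl); intros b [<-|Hb].
    + apply (Hmono a Na); [lia|exact HNa].
    + apply (Hmono b Nl); [lia|exact (HNl b Hb)].
Qed.

Lemma separating_window (A : Type) (l : list (config A)) :
  exists N, forall x y, In x l -> In y l -> agree_on N x y -> x = y.
Proof.
  destruct (@list_exists_uniform _
              (fun p N => agree_on N p.1 p.2 -> p.1 = p.2)
              (list_prod l l)) as [N HN].
  - intros p N N' HN Hp Hagree; apply Hp; exact (agree_on_mono HN Hagree).
  - intros [x y] _; destruct (classic (x = y)) as [Hxy|Hxy].
    + exists 0%nat; intros _; exact Hxy.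
    + destruct (not_all_ex_not _ _ (fun H => Hxy (agree_on_all_eq H))) as [N HN].
      exists N; simpl; intros H; contradiction.
  - exists N; intros x y Hx Hy; apply (HN (x, y)), in_prod; assumption.
Qed.

Lemma length_le_of_injective_rel (X Y : Type) (R : X -> Y -> Prop)
    (l : list X) (L : list Y) :
  NoDup l ->
  (forall x, In x l -> exists y, In y L /\ R x y) ->
  (forall x x' y, In x l -> In x' l -> R x y -> R x' y -> x = x') ->
  (length l <= length L)%coq_nat.
Proof.
  intros Hl Htot Huniq.
  assert (Himage : exists L', length L' = length l /\ NoDup L' /\ incl L' L /\
                     forall y, In y L' -> exists x, In x l /\ R x y).
  { induction l as [|x l IH]; [exists nil; repeat split; [constructor|intros y []..]|].
    inversion Hl as [|? ? Hx Hl']; subst.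
    destruct IH as [L' [Hlen [HL' [Hincl Hpre]]]]; [exact Hl'|firstorder..|].
    destruct (Htot x (in_eq _ _)) as [y [Hy Hxy]].
    exists (y :: L'); repeat split.
    - simpl; congruence.
    - constructor; [|exact HL'].
      intros HyL'; destruct (Hpre y HyL') as [x' [Hx' Hx'y]].
      apply Hx; replace x with x'; [exact Hx'|].
      apply (Huniq x' x y); [right|left|..]; auto.
    - intros z [<-|Hz]; [exact Hy|exact (Hincl z Hz)].
    - intros z [<-|Hz]; [exists x; split; [left|]; auto|].
      destruct (Hpre z Hz) as [x' [? ?]]; exists x'; split; [right|]; auto. }
  destruct Himage as [L' [Hlen [HL' [Hincl _]]]].
  rewrite <- Hlen; exact (NoDup_incl_length HL' Hincl).
Qed.

Theorem corollary5 (A : finType) (Xi : config A -> Prop)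
  (Xis : nat -> config A -> Prop) :
  subshift Xi ->
  periodically_approximable Xi ->
  (forall k, periodic_subshift (Xis k)) ->
  vietoris_converges Xis Xi ->
  (exists xi, Xi xi /\ ~ periodic xi) ->
  forall M : nat, exists K : nat, forall k, (K <= k)%N ->
    forall q, has_card (Xis k) q -> (M <= q)%N.
Proof.
  intros Hsub _ _ Hconv [x [Hx Hnp]] M.
  set centers := List.map (fun n : nat => shift_by (Z.of_nat n) x) (List.seq 0 M).
  pose proof (Injective_map_NoDup (not_periodic_shift_by_injective Hnp) (seq_NoDup M 0))
    as Hcenters_nodup.
  assert (Hcenters_in : forall y, In y centers -> Xi y).
  { intros y Hy; apply in_map_iff in Hy as [n [<- _]]; exact (subshift_shift_by Hsub Hx _). }
  destruct (separating_window centers) as [N HN].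
  destruct (Hconv (fun _ => False) (List.map (cylinder N) centers)) as [K HK].
  - exact (@empty_closed A).
  - intros O HO; apply in_map_iff in HO as [y [<- _]]; apply cylinder_open.
  - auto.
  - intros O HO; apply in_map_iff in HO as [y [<- Hy]].
    exists y; split; [exact (Hcenters_in y Hy)|intros t _; reflexivity].
  - exists K; intros k Hk q [L [HL [_ HXisL]]].
    destruct (HK k Hk) as [_ Hmeet].
    apply/leP; rewrite <- HL.
    replace M with (length centers) by (now rewrite length_map length_seq).
    apply (length_le_of_injective_rel (R := cylinder N)).
    + exact Hcenters_nodup.
    + intros y Hy; destruct (Hmeet _ (in_map (cylinder N) _ _ Hy)) as [eta [Heta Hcyl]].
      exists eta; split; [apply HXisL|]; assumption.
    + intros y y' eta Hy Hy' Hyeta Hy'eta; apply HN; [assumption..|].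
      intros t Ht; rewrite <- (Hyeta t Ht); exact (Hy'eta t Ht).
Qed.
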